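(* For all $m\ge0$, $$Q_{m+1}(x)=(2m+1)(2+3x)Q_m(x)-2x(1+x)Q_m'(x),\qquad Q_0(x)=1.$$
   Context: $P_m(x)=\sum_{i=0}^m d_i(m)x^i$ with $d_i(m)=2^{-2m}\sum_{k=i}^m 2^k\binom{2m-2k}{m-k}\binom{m+k}{k}\binom{k}{i}$ (the Boros–Moll polynomials); $Q_m(x)=2^m m!\,x^mP_m(1/x)$. *)

From mathcomp Require Import all_boot all_order all_algebra.
Set Implicit Arguments. Unset Strict Implicit. Unset Printing Implicit Defensive.
Import Order.TTheory GRing.Theory Num.Theory.
Local Open Scope ring_scope.

Definition bm_d (m i : nat) : rat :=
  (2 ^+ (2 * m))^-1 *
  \sum_(i <= k < m.+1)
     (2 ^ k * 'C(2 * m - 2 * k, m - k) * 'C(m + k, k) * 'C(k, i))%:R.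

Definition bm_P (m : nat) : {poly rat} :=
  \sum_(i < m.+1) bm_d m i *: 'X^i.

(* Q_m(x) = 2^m m! x^m P_m(1/x), written out as a polynomial:
   x^m P_m(1/x) = sum_{i=0}^m d_i(m) x^(m-i). *)
Definition bm_Q (m : nat) : {poly rat} :=
  (2 ^ m * m`!)%:R *: \sum_(i < m.+1) bm_d m i *: 'X^(m - i).

(* Writing j = m - k, the definition of d_i(m) and the binomial theorem give
     Q_m = (m!/2^m) * sum_{j+k=m} w(j,k) x^j (x+1)^k,
     w(j,k) = 2^k C(2j,j) C(j+2k,k),
   so Q_m is a combination of the "antidiagonal basis" x^j (x+1)^k, j + k = m.
   The operator L_m p = (2m+1)(2+3x) p - 2x(1+x) p' is linear and sends
   x^j (x+1)^k (with j + k = m) to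
     2(j+2k+1) x^j (x+1)^(k+1) + (2j+1) x^(j+1) (x+1)^k,
   i.e. it raises one exponent at a time.  Collecting terms on the antidiagonal
   j + k = m + 1, the theorem reduces to a three-term recurrence for the
   weights w, which follows from the elementary ratios w(j,k+1)/w(j,k) and
   w(j+1,k)/w(j,k). *)

From mathcomp Require Import all_boot all_order all_algebra.
From mathcomp Require Import ring zify.
Set Implicit Arguments. Unset Strict Implicit. Unset Printing Implicit Defensive.
Import Order.TTheory GRing.Theory Num.Theory.
Local Open Scope ring_scope.

(* Weight of x^j (x+1)^k in Q_(j+k), up to the normalisation (j+k)!/2^(j+k). *)
Definition bm_weight (j k : nat) : nat := 2 ^ k * 'C(j.*2, j) * 'C(j + k.*2, k).

Lemma bm_weightSk j k :
  (k.+1 * (j + k).+1 * bm_weight j k.+1 =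
   2 * ((j + k.*2).+2 * (j + k.*2).+1) * bm_weight j k)%N.
Proof.
have diag := mul_bin_diag (j + k.*2).+2 k.
have down := mul_bin_down (j + k.*2).+1 k.
rewrite /bm_weight (_ : j + k.+1.*2 = (j + k.*2).+2)%N; last by lia.
rewrite (_ : (j + k.*2).+1 - k = (j + k).+1)%N in down; last by lia.
rewrite /= in diag down.
transitivity (2 ^ k.+1 * 'C(j.*2, j) * (j + k).+1 * (k.+1 * 'C((j + k.*2).+2, k.+1)))%N.
  by ring.
rewrite -diag.
transitivity (2 ^ k.+1 * 'C(j.*2, j) * (j + k.*2).+2 * ((j + k).+1 * 'C((j + k.*2).+1, k)))%N.
  by ring.
by rewrite -down expnS; ring.
Qed.

Lemma bm_weightSj j k :
  (j.+1 * (j + k).+1 * bm_weight j.+1 k =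
   2 * ((j.*2).+1 * (j + k.*2).+1) * bm_weight j k)%N.
Proof.
have diag := mul_bin_diag (j.*2).+2 j.
have down := mul_bin_down (j.*2).+1 j.
have downk := mul_bin_down (j + k.*2).+1 k.
rewrite /bm_weight (_ : j.+1 + k.*2 = (j + k.*2).+1)%N; last by lia.
rewrite (_ : (j.*2).+1 - j = j.+1)%N in down; last by lia.
rewrite (_ : (j + k.*2).+1 - k = (j + k).+1)%N in downk; last by lia.
rewrite /= doubleS in diag down downk *.
transitivity (2 ^ k * (j.+1 * 'C((j.*2).+2, j.+1)) * ((j + k).+1 * 'C((j + k.*2).+1, k)))%N.
  by ring.
rewrite -diag -downk -[(j.*2).+2]/((j.+1).*2) -mul2n.
transitivity (2 ^ k * (j + k.*2).+1 * 'C(j + k.*2, k) * 2 * (j.+1 * 'C((j.*2).+1, j)))%N.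
  by ring.
by rewrite -down; ring.
Qed.

Lemma ratio_of_nat (a b x y : nat) :
  (0 < a)%N -> (a * x = b * y)%N -> x%:R = b%:R / a%:R * y%:R :> rat.
Proof.
move=> a_gt0 /(congr1 (fun n => n%:R : rat)); rewrite !natrM => axby.
by rewrite -mulrA mulrCA -axby mulKf // pnatr_eq0 -lt0n.
Qed.

(* The part of the weight of x^j (x+1)^k in Q_(j+k) that comes from the term
   x^j (x+1)^(k-1), resp. x^(j-1) (x+1)^k, of Q_(j+k-1) (see bm_step_basis). *)
Definition bm_from_k (j k : nat) : nat :=
  if k is k'.+1 then (j + k'.*2).+1.*2 * bm_weight j k' else 0.
Definition bm_from_j (j k : nat) : nat :=
  if j is j'.+1 then (j'.*2).+1 * bm_weight j' k else 0.

Lemma bm_weight_rec j k :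
  ((j + k) * bm_weight j k = 2 * (bm_from_k j k + bm_from_j j k))%N.
Proof.
have Sk i l := ratio_of_nat (isT : (0 < l.+1 * (i + l).+1)%N) (bm_weightSk i l).
have Sj i l := ratio_of_nat (isT : (0 < i.+1 * (i + l).+1)%N) (bm_weightSj i l).
rewrite /bm_from_k /bm_from_j.
case: j => [|j]; case: k => [|k] //; apply/eqP; rewrite -(eqr_nat rat); apply/eqP.
- move: (Sk 0%N k); move: (bm_weight 0 k.+1) (bm_weight 0 k) => w1 w0 ratio.
  rewrite -!mul2n !(natrD, natrM) ratio -!mul2n !(natrD, natrM, mulrS).
  by field; rewrite !nat1r -?natrD ?nat1r !pnatr_eq0.
- move: (Sj j 0%N); move: (bm_weight j.+1 0) (bm_weight j 0) => w1 w0 ratio.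
  rewrite -!mul2n !(natrD, natrM) ratio -!mul2n !(natrD, natrM, mulrS).
  by field; rewrite !nat1r -?natrD ?nat1r !pnatr_eq0.
- move: (Sk j.+1 k) (Sj j k) (Sk j k).
  move: (bm_weight j.+1 k.+1) (bm_weight j.+1 k) (bm_weight j k.+1) (bm_weight j k).
  move=> w11 w10 w01 w00 ratio11 ratio10 ratio01.
  rewrite -!mul2n !(natrD, natrM) ratio11 ratio10 ratio01 -!mul2n !(natrD, natrM, mulrS).
  by field; rewrite !nat1r -?natrD ?nat1r !pnatr_eq0.
Qed.

Lemma antidiag_recl (V : nmodType) (F : nat -> nat -> V) m :
  \sum_(k < m.+2) F (m.+1 - k)%N k = F m.+1 0%N + \sum_(k < m.+1) F (m - k)%N k.+1.
Proof. by rewrite big_ord_recl subn0. Qed.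

Lemma antidiag_recr (V : nmodType) (F : nat -> nat -> V) m :
  \sum_(k < m.+2) F (m.+1 - k)%N k = \sum_(k < m.+1) F (m - k).+1%N k + F 0%N m.+1.
Proof.
rewrite big_ord_recr subnn; congr (_ + _).
by apply: eq_bigr => k _; rewrite /= subSn // -ltnS.
Qed.

Lemma binomial_reversed (R : comNzRingType) m k : (k <= m)%N ->
  \sum_(i < m.+1) 'C(k, i)%:R *: 'X^(m - i) = 'X^(m - k) * ('X + 1) ^+ k :> {poly R}.
Proof.
move=> le_km; rewrite exprDn mulr_sumr.
rewrite (big_ord_widen m.+1 (fun i => 'X^(m - k) * ('X ^+ (k - i) * 1 ^+ i *+ 'C(k, i)))) //.
rewrite [RHS]big_mkcond /=; apply: eq_bigr => i _.
case: ifP => [le_ik | /negbT]; last by rewrite -leqNgt => /bin_small ->; rewrite scale0r.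
rewrite expr1n mulr1 mulrnAr -exprD scaler_nat; congr ('X^_ *+ _); lia.
Qed.

Definition bm_basis (j k : nat) : {poly rat} := 'X^j * ('X + 1) ^+ k.

Definition bm_step (m : nat) (p : {poly rat}) : {poly rat} :=
  ((2 * m + 1)%:R * (2%:P + 3%:P * 'X)) * p - (2%:P * 'X * (1 + 'X)) * p^`().

Lemma bm_stepD m : {morph bm_step m : p q / p + q}.
Proof. by move=> p q; rewrite /bm_step derivD; ring. Qed.

Lemma bm_stepZ m c p : bm_step m (c *: p) = c *: bm_step m p.
Proof. by rewrite /bm_step derivZ -!mul_polyC; ring. Qed.

Lemma bm_step_sum m (I : Type) (r : seq I) (F : I -> {poly rat}) :
  bm_step m (\sum_(i <- r) F i) = \sum_(i <- r) bm_step m (F i).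
Proof.
apply: (big_morph _ (bm_stepD m)).
by rewrite /bm_step deriv0 !mulr0 subr0.
Qed.

(* x(1+x) d/dx acts diagonally on exponents: j on x^j and k on (x+1)^k. *)
Lemma euler_bm_basis j k :
  'X * (1 + 'X) * (bm_basis j k)^`() =
    j%:R *: bm_basis j k.+1 + k%:R *: bm_basis j.+1 k.
Proof.
rewrite /bm_basis derivM derivXn deriv_exp derivD derivX derivC addr0 mul1r !scaler_nat.
by case: j => [|j]; case: k => [|k]; rewrite /= ?mulr0n ?mul0r ?add0r ?mulr0 ?addr0 ?exprS; ring.
Qed.

Lemma bm_step_basis m j k : (j + k = m)%N ->
  bm_step m (bm_basis j k) =
    ((j + k.*2).+1.*2)%:R *: bm_basis j k.+1 + (j.*2).+1%:R *: bm_basis j.+1 k.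
Proof.
move=> <-; rewrite /bm_step.
have -> : 2%:P * 'X * (1 + 'X) * (bm_basis j k)^`() =
          2%:P * ('X * (1 + 'X) * (bm_basis j k)^`()) by ring.
rewrite euler_bm_basis /bm_basis -!mul_polyC !polyC_natr -!mul2n !exprS; ring.
Qed.

Lemma bm_d_weight m i :
  bm_d m i = (2 ^+ (2 * m))^-1 * \sum_(k < m.+1) (bm_weight (m - k) k * 'C(k, i))%:R.
Proof.
rewrite /bm_d big_geq_mkord big_mkcond /=; congr (_ * _); apply: eq_bigr => k _.
case: leqP => [_ | lt_ki]; last by rewrite bin_small ?muln0.
have le_km : (k <= m)%N by rewrite -ltnS.
by rewrite /bm_weight -!mul2n (_ : m - k + 2 * k = m + k)%N ?mulnBr; last lia.
Qed.

Lemma bm_Q_expand m :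
  bm_Q m = (m`!%:R / 2 ^+ m) *:
           \sum_(k < m.+1) (bm_weight (m - k) k)%:R *: bm_basis (m - k) k.
Proof.
have -> : (m`!%:R / 2 ^+ m : rat) = (2 ^ m * m`!)%:R * (2 ^+ (2 * m))^-1.
  by rewrite natrM natrX mulnC exprM; field; rewrite expf_neq0.
rewrite /bm_Q -scalerA; congr (_ *: _).
under eq_bigr do rewrite bm_d_weight -scalerA.
rewrite -scaler_sumr; congr (_ *: _).
under eq_bigr do rewrite scaler_suml.
rewrite exchange_big /=; apply: eq_bigr => k _.
under eq_bigr do rewrite natrM -scalerA.
by rewrite -scaler_sumr binomial_reversed // -ltnS.
Qed.

(* L_m Q_m = Q_(m+1): each basis term of Q_m contributes to two neighbours on
   the next antidiagonal, and bm_weight_rec collects the contributions. *)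
Lemma bm_step_Q m : bm_step m (bm_Q m) = bm_Q m.+1.
Proof.
pose Fk j k := (bm_from_k j k)%:R *: bm_basis j k.
pose Fj j k := (bm_from_j j k)%:R *: bm_basis j k.
have step_term (k : 'I_m.+1) :
    bm_step m ((bm_weight (m - k) k)%:R *: bm_basis (m - k) k) =
    Fk (m - k)%N k.+1 + Fj (m - k).+1%N k.
  rewrite bm_stepZ (bm_step_basis (subnK (ltnSE (ltn_ord k)))) scalerDr !scalerA.
  by rewrite /Fk /Fj /= -!natrM mulnC [in X in _ + X]mulnC.
have collect j k : Fk j k + Fj j k =
    ((j + k)%:R / 2 * (bm_weight j k)%:R) *: bm_basis j k.
  rewrite -scalerDl -natrD -mulrA mulrCA -natrM bm_weight_rec natrM.
  by rewrite mulKf // pnatr_eq0.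
rewrite bm_Q_expand bm_stepZ bm_step_sum.
under eq_bigr do rewrite step_term.
rewrite big_split /=.
(* The boundary terms (j, 0) and (0, k) receive only one of the two contributions. *)
have sum_k : \sum_(k < m.+2) Fk (m.+1 - k)%N k = \sum_(k < m.+1) Fk (m - k)%N k.+1.
  by rewrite antidiag_recl /Fk scale0r add0r.
have sum_j : \sum_(k < m.+2) Fj (m.+1 - k)%N k = \sum_(k < m.+1) Fj (m - k).+1%N k.
  by rewrite antidiag_recr /Fj scale0r addr0.
rewrite -sum_k -sum_j -big_split /=.
under eq_bigr => k _ do rewrite collect (subnK (ltnSE (ltn_ord k))) -scalerA.
rewrite -scaler_sumr scalerA [RHS]bm_Q_expand; congr (_ *: _).
by rewrite factS natrM exprS; field; rewrite expf_neq0.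
Qed.

Theorem mainTheorem6 :
  bm_Q 0 = 1 /\
  forall m : nat,
    bm_Q m.+1 =
      ((2 * m + 1)%:R * (2%:P + 3%:P * 'X)) * bm_Q m
      - (2%:P * 'X * (1 + 'X)) * (bm_Q m)^`().
Proof.
split; last by move=> m; rewrite -bm_step_Q.
by rewrite bm_Q_expand big_ord1 expr0 divr1 /bm_basis /bm_weight /= !scale1r mulr1.
Qed.
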